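(* Let $G$ be a graph, $d$ a positive integer, $X\subset V(G)$, and let $C(X)$ be the $d$-critical set of $X$. Suppose $B$ is an escape-way in $G$ with $V_{\text{out}}(B)\subset C(X)$. Then $|A_{K(B)}(v)|\geq \deg_G(v)-d$ for every vertex $v\notin C(X)$.
   Context: The $d$-critical set $C(X)$ of a set $X\subset V(G)$ is the terminal set of the following bootstrap percolation process: $X_0=X$, and $X_{i+1}$ is the union of $X_i$ with all vertices $v$ having at least $d$ neighbours at distance at most $2$ from $X_i$ in the graph $G\setminus v$ (vertices of $X_i$ have distance $0$). An oriented subgraph of $G$ is a subgraph with an orientation of each edge, viewed as a digraph on $V(G)$; $N^-_D(v)=\{u:uv\in E(D)\}$; $V_{\text{in}}(D)$ and $V_{\text{out}}(D)$ are the sets of vertices with at least one in-neighbour, resp. out-neighbour, in $D$. An escape-way in $G$ is an oriented subgraph $D$ of $G$ in which every vertex has in-degree at most $1$ and such that whenever $x,y\in V_{\text{in}}(D)$ and $xy\in E(G)$, exactly one of $xy$, $yx$ lies in $E(D)$. For a (bi-)oriented subgraph $D$ (possibly containing both orientations of an edge), $A_D(v)=N_G(v)\setminus\big(V_{\text{in}}(D-v)\cup N^-_D(v)\big)$, where $D-v$ is $D$ with $v$ deleted. $K(D)$ is obtained from $D$ by adding, for every directed edge $uv\in E(D)$, all directed edges $vw$ with $w\in N_G(v)\setminus\{u\}$. *)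

From mathcomp Require Import all_boot.
Set Implicit Arguments. Unset Strict Implicit. Unset Printing Implicit Defensive.

(* A finite simple graph: vertex type T : finType, adjacency e : rel T,
   symmetric and irreflexive.  Oriented subgraphs are relations D : rel T,
   D u v meaning the directed edge uv. *)

Section Graphs.
Variables (T : finType) (e : rel T).

Definition simple_graph : Prop := symmetric e /\ irreflexive e.

Definition nbhd (v : T) : {set T} := [set u | e v u].
Definition deg (v : T) : nat := #|nbhd v|.

(* u is at distance at most 2 from S in the graph G \ v (u <> v) *)
Definition near2_avoid (v : T) (S : {set T}) (u : T) : bool :=
  (u != v) &&
  [|| u \in S,
      [exists x, [&& x != v, x \in S & e u x]]
    | [exists w, [exists x, [&& w != v, x != v, x \in S, e u w & e w x]]]].

Definition crit_step (d : nat) (S : {set T}) : {set T} :=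
  S :|: [set v | d <= #|[set u | e v u && near2_avoid v S u]|].

(* the d-critical set C(X): terminal set of X_0 = X, X_{i+1} = crit_step X_i,
   i.e. the union of all X_i *)
Definition in_critical (d : nat) (X : {set T}) (v : T) : Prop :=
  exists i : nat, v \in iter i (crit_step d) X.

Definition oriented_subgraph (D : rel T) : Prop :=
  (forall u v, D u v -> e u v) /\ (forall u v, D u v -> ~~ D v u).

Definition in_nbrs (D : rel T) (v : T) : {set T} := [set u | D u v].
Definition V_in (D : rel T) : {set T} := [set v | [exists u, D u v]].
Definition V_out (D : rel T) : {set T} := [set u | [exists v, D u v]].

Definition escape_way (B : rel T) : Prop :=
  oriented_subgraph B /\
  (forall v, #|in_nbrs B v| <= 1) /\
  (forall x y, x \in V_in B -> y \in V_in B -> e x y -> B x y (+) B y x).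

Definition del_vertex (D : rel T) (v : T) : rel T :=
  fun x y => [&& x != v, y != v & D x y].

Definition A_set (D : rel T) (v : T) : {set T} :=
  nbhd v :\: (V_in (del_vertex D v) :|: in_nbrs D v).

Definition K (D : rel T) : rel T :=
  fun v w => D v w || [exists u, [&& D u v, e v w & w != u]].

End Graphs.

From mathcomp Require Import all_boot.
Set Implicit Arguments. Unset Strict Implicit. Unset Printing Implicit Defensive.

(* The critical set C = C(X) is closed under the percolation step, so a vertex
   v outside C has fewer than d neighbours within distance 2 of C in G \ v.
   Every other neighbour u of v lies in A_{K(B)}(v): an arc zu of K(B) has its
   tail z in V_out(B) or adjacent to a vertex of V_out(B), and V_out(B) is
   contained in C, so u would be within distance 2 of C. *)

Section CriticalClosure.
Variables (T : finType) (e : rel T) (d : nat).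

Definition near_nbhd (v : T) (S : {set T}) : {set T} :=
  [set u | e v u && near2_avoid e v S u].

Lemma near2_avoid_subset {v u : T} {S S' : {set T}} :
  S \subset S' -> near2_avoid e v S u -> near2_avoid e v S' u.
Proof.
rewrite /near2_avoid => /subsetP sSS' /andP[-> /or3P[uS | /existsP[x] | ]] /=.
- by rewrite sSS'.
- move=> /and3P[xv xS eux]; apply/or3P/Or32/existsP; exists x.
  by rewrite xv (sSS' x xS) eux.
- case/existsP=> w /existsP[x /and5P[wv xv xS euw ewx]]; apply/or3P/Or33/existsP; exists w.
  by apply/existsP; exists x; rewrite wv xv (sSS' x xS) euw ewx.
Qed.

Lemma crit_step_mono : {homo crit_step e d : S S' / S \subset S'}.
Proof.
move=> S S' sSS'; apply: setUSS => //; apply/subsetP => v; rewrite !inE.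
move/leq_trans; apply; apply/subset_leq_card/subsetP => u; rewrite !inE.
by case/andP=> -> /(near2_avoid_subset sSS').
Qed.

Variable X : {set T}.

(* [fixset] iterates a monotone operator from [set0]; shifting crit_step by X
   gives one whose iterates are those of crit_step from X. *)
Definition crit_closure : {set T} := fixset (fun S => crit_step e d (X :|: S)).

Lemma crit_closure_step_mono :
  {homo (fun S => crit_step e d (X :|: S)) : S S' / S \subset S'}.
Proof. by move=> S S' sSS'; apply/crit_step_mono/setUS. Qed.

Lemma iter_crit_closure_step i :
  iter i.+1 (fun S => crit_step e d (X :|: S)) set0 = iter i.+1 (crit_step e d) X.
Proof.
have X_sub k : X \subset iter k (crit_step e d) X.
  by elim: k => //= k IHk; apply: subset_trans IHk (subsetUl _ _).
elim: i => [|i IHi]; first by rewrite /= setU0.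
by rewrite iterS IHi (setUidPr (X_sub _)).
Qed.

Lemma in_criticalE u : in_critical e d X u <-> u \in crit_closure.
Proof.
split=> [[i ui] | /fix_order_proof[i ui]].
  apply: (subsetP (iter_sub_fix crit_closure_step_mono i.+1)).
  by rewrite iter_crit_closure_step /= /crit_step inE ui.
exists i.+1; rewrite -iter_crit_closure_step.
exact: (subsetP (subset_iterS crit_closure_step_mono i)).
Qed.

Lemma crit_closureK : crit_step e d (X :|: crit_closure) = crit_closure.
Proof. exact: fixsetK crit_closure_step_mono. Qed.

Lemma card_near_nbhd_crit_closure v :
  v \notin crit_closure -> #|near_nbhd v crit_closure| < d.
Proof.
rewrite -{1}crit_closureK => vNC.
have : v \notin crit_step e d crit_closure.
  by apply: contra vNC; apply/subsetP/crit_step_mono/subsetUr.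
by rewrite /crit_step !inE negb_or ltnNge => /andP[].
Qed.

End CriticalClosure.

Section EscapeNeighbours.
Variables (T : finType) (e : rel T) (B : rel T) (S : {set T}) (v : T).
Hypotheses (e_sym : symmetric e) (e_irr : irreflexive e).
Hypothesis B_edge : forall x y, B x y -> e x y.
Hypothesis V_out_sub : V_out B \subset S.
Hypothesis vNS : v \notin S.

Lemma near2_avoid_mem u : u != v -> u \in S -> near2_avoid e v S u.
Proof. by move=> uv uS; rewrite /near2_avoid uv uS. Qed.

Lemma near2_avoid_adj u x : u != v -> x \in S -> e u x -> near2_avoid e v S u.
Proof.
move=> uv xS eux; have xv : x != v by apply: contraNneq vNS => <-.
by rewrite /near2_avoid uv; apply/or3P/Or32/existsP; exists x; rewrite xv xS eux.
Qed.

Lemma near2_avoid_dist2 u w x :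
  u != v -> w != v -> x \in S -> e u w -> e w x -> near2_avoid e v S u.
Proof.
move=> uv wv xS euw ewx; have xv : x != v by apply: contraNneq vNS => <-.
rewrite /near2_avoid uv; apply/or3P/Or33/existsP; exists w.
by apply/existsP; exists x; rewrite wv xv xS euw ewx.
Qed.

Lemma K_edge u w : K e B u w -> e u w.
Proof. by case/orP=> [/B_edge // | /existsP[y /and3P[]]]. Qed.

Lemma K_tail_near u w : K e B u w -> u \in S \/ exists2 y, y \in S & e u y.
Proof.
have V_outS x y : B x y -> x \in S.
  by move=> Bxy; apply: (subsetP V_out_sub); rewrite inE; apply/existsP; exists y.
case/orP=> [/V_outS | /existsP[y /and3P[Byu _ _]]]; first by left.
by right; exists y; [apply: V_outS Byu | rewrite e_sym B_edge].
Qed.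

Lemma nbhd_near_nbhdC_sub_A_set :
  nbhd e v :\: near_nbhd e v S \subset A_set e (K e B) v.
Proof.
apply/subsetP => u; rewrite !inE => /andP[uNnear evu]; rewrite evu andbT.
rewrite evu /= in uNnear.
have uv : u != v by apply: contraTneq evu => ->; rewrite e_irr.
rewrite negb_or; apply/andP; split.
- apply/existsP => -[z /and3P[zv _ Kzu]]; apply: (negP uNnear).
  have euz : e u z by rewrite e_sym K_edge.
  case: (K_tail_near Kzu) => [zS | [y yS ezy]].
    exact: near2_avoid_adj uv zS euz.
  exact: near2_avoid_dist2 uv zv yS euz ezy.
- apply/negP => Kuv; apply: (negP uNnear).
  case: (K_tail_near Kuv) => [uS | [y yS euy]].
    exact: near2_avoid_mem uv uS.
  exact: near2_avoid_adj uv yS euy.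
Qed.

End EscapeNeighbours.

Theorem proposition2p8 (T : finType) (e : rel T) (d : nat) (X : {set T})
    (B : rel T) :
  simple_graph e -> 0 < d ->
  escape_way e B ->
  (forall u, u \in V_out B -> in_critical e d X u) ->
  forall v, ~ in_critical e d X v ->
    deg e v - d <= #|A_set e (K e B) v|.
Proof.
move=> [e_sym e_irr] _ [[B_edge _] _] V_out_crit v vNcrit.
set C := crit_closure e d X.
have vNC : v \notin C by apply/negP => /in_criticalE.
have V_out_sub : V_out B \subset C.
  by apply/subsetP => u /V_out_crit /in_criticalE.
have near_lt := card_near_nbhd_crit_closure vNC.
have A_sup := nbhd_near_nbhdC_sub_A_set e_sym e_irr B_edge V_out_sub vNC.
apply: leq_trans (subset_leq_card A_sup).
by rewrite cardsD leq_sub2l // ltnW // (leq_ltn_trans _ near_lt) // subset_leq_card // subsetIr.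
Qed.
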